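(* Suppose that (i) there is a net $\{\varphi_\alpha\}$ in $MA(G,\sigma)$ converging pointwise to $1$ with $\|M_{\varphi_\alpha}\|=1$ for all $\alpha$, and (ii) for each $\alpha$ there is a function $\kappa_\alpha:G\to[1,\infty)$ such that $G$ is $\kappa_\alpha$-decaying and $\varphi_\alpha\kappa_\alpha\in c_0(G)$. Then $(G,\sigma)$ has the metric Fejér property.
   Context: $G$ is a discrete group, $\sigma:G\times G\to\mathbb{T}$ a normalized 2-cocycle ($\sigma(g,h)\sigma(gh,k)=\sigma(h,k)\sigma(g,hk)$, $\sigma(g,e)=\sigma(e,g)=1$); $\Lambda_\sigma(g)$ is the unitary on $\ell^2(G)$ with $(\Lambda_\sigma(g)\xi)(h)=\sigma(g,g^{-1}h)\xi(g^{-1}h)$, $\lambda=\Lambda_1$; $C^*_r(G,\sigma)$ is the operator-norm closure of $\mathrm{span}\,\Lambda_\sigma(G)$. For $\varphi:G\to\mathbb{C}$, $M_\varphi$ is the linear map with $M_\varphi(\Lambda_\sigma(g))=\varphi(g)\Lambda_\sigma(g)$; $\varphi\in MA(G,\sigma)$ if $M_\varphi$ is bounded, then extended to $C^*_r(G,\sigma)$. $\mathcal{K}(G)$ = finitely supported functions, $\pi_\lambda(f)=\sum_g f(g)\lambda(g)$; for $\kappa:G\to[1,\infty)$, $\|\xi\|_{2,\kappa}=\|\xi\kappa\|_2$ and $G$ is $\kappa$-decaying if $f\mapsto\pi_\lambda(f)$ is bounded from $(\mathcal{K}(G),\|\cdot\|_{2,\kappa})$ to $C^*_r(G,1)$. $c_0(G)$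 is the space of functions vanishing at infinity. $(G,\sigma)$ has the metric Fejér property if there is a net $\{\varphi_\beta\}$ in $\mathcal{K}(G)$ converging pointwise to $1$ with $\|M_{\varphi_\beta}\|=1$ for all $\beta$ (such a net then satisfies $M_{\varphi_\beta}(x)\to x$ in norm for all $x\in C^*_r(G,\sigma)$). *)

From mathcomp Require Import all_boot all_order all_algebra.
From mathcomp Require Import monoid.
From mathcomp Require Import all_classical all_reals all_analysis.
From mathcomp Require Import complex.
Set Implicit Arguments. Unset Strict Implicit. Unset Printing Implicit Defensive.
Import Order.TTheory GRing.Theory Num.Theory.
Local Open Scope classical_set_scope.
Local Open Scope ring_scope.

Section Defs.
Variables (R : realType) (G : groupType).
Local Notation C := (R[i]).

Definition cnorm (z : C) : R := ComplexField.Normc.normc z.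

Definition finsupp (f : G -> C) : Prop := finite_set [set g | f g != 0].

Definition two_cocycle (s : G -> G -> C) : Prop :=
  (forall g h, cnorm (s g h) = 1) /\
  (forall g h k, s g h * s (g * h)%g k = s h k * s g (h * k)%g) /\
  (forall g, s g 1%g = 1 /\ s 1%g g = 1).

Definition triv_cocycle : G -> G -> C := fun _ _ => 1.

(* l^2(G) norm (in the extended reals; +oo if xi is not in l^2(G)) *)
Definition l2norm (xi : G -> C) : \bar R :=
  sqrte (\esum_(g in [set: G]) ((cnorm (xi g)) ^+ 2)%:E).

(* (sum_g c(g) Lambda_s(g)) xi, for c finitely supported:
   (Lambda_s(g) xi)(h) = s(g, g^-1 h) xi(g^-1 h) *)
Definition twisted_apply (s : G -> G -> C) (c xi : G -> C) : G -> C :=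
  fun h => \sum_(g \in [set: G]) (c g * s g (g^-1 * h)%g * xi (g^-1 * h)%g).

Definition opnorm (s : G -> G -> C) (c : G -> C) : \bar R :=
  ereal_sup [set l2norm (twisted_apply s c xi) | xi in [set xi | (l2norm xi <= 1)%E]].

(* phi in MA(G,s): M_phi bounded on span Lambda_s(G) for the C*_r-norm *)
Definition in_MA (s : G -> G -> C) (phi : G -> C) : Prop :=
  exists M : R, forall c : G -> C, finsupp c ->
    (opnorm s (fun g => (phi g * c g)%R) <= M%:E * opnorm s c)%E.

(* ||M_phi|| : norm of the multiplier on span Lambda_s(G) (dense in C*_r(G,s)) *)
Definition mult_norm (s : G -> G -> C) (phi : G -> C) : \bar R :=
  ereal_sup [set opnorm s (fun g => (phi g * c g)%R) |
             c in [set c | finsupp c /\ (opnorm s c <= 1)%E]].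

(* G is kappa-decaying: f |-> pi_lambda(f) bounded from (K(G), ||.||_{2,kappa})
   to C*_r(G,1) *)
Definition kappa_decaying (kappa : G -> R) : Prop :=
  exists M : R, forall f : G -> C, finsupp f ->
    (opnorm triv_cocycle f <= M%:E * l2norm (fun g => (f g * ((kappa g)%:C)%C)%R))%E.

Definition c0 (f : G -> C) : Prop :=
  forall eps : R, 0 < eps -> finite_set [set g | eps <= cnorm (f g)].

Definition pw_conv_to_one (I : Type) (le : I -> I -> Prop) (phi : I -> G -> C)
  : Prop :=
  forall (g : G) (eps : R), 0 < eps ->
    exists i0 : I, forall i, le i0 i -> cnorm (phi i g - 1) < eps.

Definition metric_fejer (s : G -> G -> C) : Prop :=
  exists (I : Type) (le : I -> I -> Prop),
    (inhabited I /\ (forall i, le i i) /\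
     (forall i j k, le i j -> le j k -> le i k) /\
     (forall i j, exists k, le i k /\ le j k)) /\
    exists phi : I -> G -> C,
      (forall i, finsupp (phi i)) /\ pw_conv_to_one le phi /\
      (forall i, mult_norm s (phi i) = 1%E).

End Defs.

Definition directed (I : Type) (le : I -> I -> Prop) : Prop :=
  inhabited I /\ (forall i, le i i) /\
  (forall i j k, le i j -> le j k -> le i k) /\
  (forall i j, exists k, le i k /\ le j k).

From mathcomp Require Import all_boot all_order all_algebra.
From mathcomp Require Import monoid.
From mathcomp Require Import all_classical all_reals all_analysis.
From mathcomp Require Import complex.
From mathcomp Require Import ring lra.
Import Order.TTheory GRing.Theory Num.Theory.
Local Open Scope classical_set_scope.
Local Open Scope ring_scope.
Set Implicit Arguments. Unset Strict Implicit. Unset Printing Implicit Defensive.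

(* Cut [phi_a] down to the finite set where [|phi_a| kappa_a >= eps].  The
   discarded part [d] has [|d| kappa_a <= eps], and decay bounds its multiplier
   norm: since [|sigma| = 1], [M_d x] is dominated by the untwisted convolution
   by [|d x|], of norm at most [C_a ||d x kappa_a||_2 <= C_a eps ||x||_2
   <= C_a eps ||x||].  So the truncation has multiplier norm within [C_a eps]
   of [1] and can be renormalised to norm exactly [1].  Nothing is cut where
   [phi_a] is close to [1] (as [kappa_a >= 1]), so letting [a] run along the
   net and [eps] to [0] yields a Fejer net converging pointwise to [1]. *)

Section ComplexModulus.
Variable R : realType.
Local Notation C := R[i].
Implicit Types x y z : C.

Lemma cnormE z : ((cnorm z)%:C)%C = `|z|.
Proof. by rewrite normc_def; case: z. Qed.

Lemma cnorm_ge0 z : 0 <= cnorm z.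
Proof. by rewrite -(@lecR R) cnormE; exact: normr_ge0. Qed.

Lemma cnormM x y : cnorm (x * y) = cnorm x * cnorm y.
Proof. exact: ComplexField.Normc.normcM. Qed.

Lemma cnormD x y : cnorm (x + y) <= cnorm x + cnorm y.
Proof. by rewrite -(@lecR R) rmorphD /= !cnormE ler_normD. Qed.

Lemma cnormN x : cnorm (- x) = cnorm x.
Proof. by apply: (@complexI R); rewrite !cnormE normrN. Qed.

Lemma cnormB x y : cnorm (x - y) = cnorm (y - x).
Proof. by rewrite -cnormN opprB. Qed.

Lemma cnormR (r : R) : cnorm (r%:C)%C = `|r|.
Proof. by apply: (@complexI R); rewrite cnormE normc_def /= expr0n /= addr0 sqrtr_sqr. Qed.

Lemma cnorm0 : cnorm (0 : C) = 0.
Proof. exact: ComplexField.Normc.normc0. Qed.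

Lemma cnorm1 : cnorm (1 : C) = 1.
Proof. exact: ComplexField.Normc.normc1. Qed.

Lemma cnorm_sum (T : Type) (r : seq T) (F : T -> C) :
  cnorm (\sum_(t <- r) F t) <= \sum_(t <- r) cnorm (F t).
Proof.
rewrite -(@lecR R) rmorph_sum cnormE (eq_bigr _ (fun t _ => cnormE (F t))).
exact: ler_norm_sum.
Qed.

End ComplexModulus.

Section FiniteSums.
Variables (R : realType) (T : eqType) (r : seq T) (a b : T -> R).
Hypotheses (a_ge0 : forall x, 0 <= a x) (b_ge0 : forall x, 0 <= b x).

Let sqrt_sum_sqrK (u : T -> R) :
  \sum_(x <- r) u x ^+ 2 = Num.sqrt (\sum_(x <- r) u x ^+ 2) ^+ 2.
Proof. by rewrite sqr_sqrtr // sumr_ge0 // => x _; exact: sqr_ge0. Qed.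

Let sum_sqr_eq0 (u : T -> R) : Num.sqrt (\sum_(x <- r) u x ^+ 2) = 0 ->
  forall x, x \in r -> u x = 0.
Proof.
move=> /eqP; rewrite sqrtr_eq0 le_eqVlt ltNge sumr_ge0 ?orbF => [|x _]; last exact: sqr_ge0.
rewrite (psumr_eq0 _ (fun x _ => sqr_ge0 (u x))) => /allP u0 x /u0.
by rewrite /= sqrf_eq0 => /eqP.
Qed.

Lemma cauchy_schwarz_seq :
  \sum_(x <- r) a x * b x <=
  Num.sqrt (\sum_(x <- r) a x ^+ 2) * Num.sqrt (\sum_(x <- r) b x ^+ 2).
Proof.
set A := Num.sqrt _; set B := Num.sqrt _.
have [A0 B0] : 0 <= A /\ 0 <= B by split; exact: sqrtr_ge0.
have [AB0|ABn0] := eqVneq (A * B) 0.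
  suff -> : \sum_(x <- r) a x * b x = 0 by rewrite AB0.
  rewrite big_seq big1 // => x xr.
  by move/eqP: AB0; rewrite mulf_eq0 => /orP[]/eqP/sum_sqr_eq0-> //; rewrite ?mul0r ?mulr0.
have amgm : 2 * A * B * (\sum_(x <- r) a x * b x) <= 2 * (A * B) ^+ 2.
  rewrite mulr_sumr.
  apply: le_trans (_ : _ <= \sum_(x <- r) (a x ^+ 2 * B ^+ 2 + b x ^+ 2 * A ^+ 2)) _.
    apply: ler_sum => x _; have := sqr_ge0 (a x * B - b x * A); nra.
  by rewrite big_split /= -!mulr_suml (sqrt_sum_sqrK a) (sqrt_sum_sqrK b) -/A -/B; lra.
have : 0 < A * B by rewrite lt_def ABn0 mulr_ge0.
nra.
Qed.

Lemma minkowski_seq :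
  Num.sqrt (\sum_(x <- r) (a x + b x) ^+ 2) <=
  Num.sqrt (\sum_(x <- r) a x ^+ 2) + Num.sqrt (\sum_(x <- r) b x ^+ 2).
Proof.
have CS := cauchy_schwarz_seq.
set A := Num.sqrt _ in CS *; set B := Num.sqrt _ in CS *.
have [A0 B0] : 0 <= A /\ 0 <= B by split; exact: sqrtr_ge0.
rewrite -(ger0_norm (addr_ge0 A0 B0)) -sqrtr_sqr ler_sqrt ?sqr_ge0 //.
have -> : \sum_(x <- r) (a x + b x) ^+ 2 =
   \sum_(x <- r) a x ^+ 2 + 2 * \sum_(x <- r) a x * b x + \sum_(x <- r) b x ^+ 2.
  by rewrite mulr_sumr -!big_split /=; apply: eq_bigr => x _; rewrite sqrrD; ring.
rewrite (sqrt_sum_sqrK a) (sqrt_sum_sqrK b) -/A -/B; nra.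
Qed.

End FiniteSums.

Section L2Norm.
Variables (R : realType) (G : groupType).
Local Notation C := R[i].
Implicit Types (f h : G -> C) (X : set G).

Lemma l2norm_ge0 f : (0 <= l2norm f)%E.
Proof. exact: sqrte_ge0. Qed.

Lemma l2norm_ge_fsum f X : finite_set X ->
  ((Num.sqrt (\sum_(g \in X) cnorm (f g) ^+ 2))%:E <= l2norm f)%E.
Proof.
move=> Xf; rewrite /l2norm -[leLHS]/(sqrte (\sum_(g \in X) cnorm (f g) ^+ 2)%:E).
rewrite lee_sqrt; last by apply: esum_ge0 => g _; rewrite lee_fin sqr_ge0.
by apply: esum_ge; exists X; rewrite ?fsumEFin.
Qed.

Lemma l2norm_le_fsum f (x : \bar R) :
  (forall X, finite_set X -> ((Num.sqrt (\sum_(g \in X) cnorm (f g) ^+ 2))%:E <= x)%E) ->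
  (l2norm f <= x)%E.
Proof.
have sum0 : \sum_(g \in set0) cnorm (f g) ^+ 2 = 0 by rewrite fsbig_set0.
case: x => [r| |] fsum_le; last 2 first.
- exact: leey.
- by have := fsum_le set0 (finite_set0 G); rewrite sum0 sqrtr0.
have r0 : 0 <= r by have := fsum_le set0 (finite_set0 G); rewrite sum0 sqrtr0 lee_fin.
rewrite -(ger0_norm r0) -sqrtr_sqr /l2norm.
rewrite -[leRHS]/(sqrte (r ^+ 2)%:E) lee_sqrt ?lee_fin ?sqr_ge0 //.
apply: ge_ereal_sup => _ [X [Xf _] <-]; rewrite fsumEFin // lee_fin.
have := fsum_le X Xf; rewrite lee_fin -{1}(ger0_norm r0) -sqrtr_sqr ler_sqrt //.
exact: sqr_ge0.
Qed.

Lemma l2norm_le_scale f h (e : R) : 0 <= e ->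
  (forall g, cnorm (f g) <= e * cnorm (h g)) -> (l2norm f <= e%:E * l2norm h)%E.
Proof.
move=> e0 fh; apply: l2norm_le_fsum => X Xf.
apply: le_trans (lee_wpmul2l _ (l2norm_ge_fsum h Xf)); last by rewrite lee_fin.
rewrite -EFinM lee_fin -(ger0_norm e0) -sqrtr_sqr -sqrtrM ?sqr_ge0 //.
rewrite ler_sqrt; last by rewrite mulr_ge0 ?sqr_ge0 // fsumr_ge0 // => g _; exact: sqr_ge0.
rewrite mulr_fsumr !fsbig_finite //; apply: ler_sum => g _.
by rewrite -exprMn lerXn2r ?nnegrE ?mulr_ge0 ?cnorm_ge0.
Qed.

Lemma l2normD f h : (l2norm (fun g => (f g + h g)%R) <= l2norm f + l2norm h)%E.
Proof.
apply: l2norm_le_fsum => X Xf.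
apply: le_trans (leeD (l2norm_ge_fsum f Xf) (l2norm_ge_fsum h Xf)); rewrite -EFinD lee_fin.
apply: le_trans (_ : Num.sqrt (\sum_(g \in X) (cnorm (f g) + cnorm (h g)) ^+ 2) <= _).
  rewrite ler_sqrt; last by rewrite fsumr_ge0 // => g _; exact: sqr_ge0.
  rewrite !fsbig_finite //; apply: ler_sum => g _.
  by rewrite lerXn2r ?nnegrE ?addr_ge0 ?cnorm_ge0 ?cnormD.
by rewrite !fsbig_finite //; apply: minkowski_seq => g; exact: cnorm_ge0.
Qed.

Lemma eq_l2norm f h : (forall g, cnorm (f g) = cnorm (h g)) -> l2norm f = l2norm h.
Proof. by move=> fh; rewrite /l2norm; congr sqrte; apply: eq_esum => g _; rewrite fh. Qed.

Lemma l2norm0 : l2norm (fun _ : G => 0 : C) = 0%E.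
Proof.
apply/eqP; rewrite eq_le l2norm_ge0 andbT -(mul0e (l2norm (fun _ : G => 0 : C))).
by apply: l2norm_le_scale => // g; rewrite mul0r cnorm0.
Qed.

Lemma l2normZ (t : R) f : 0 < t ->
  l2norm (fun g => (t%:C)%C * f g) = (t%:E * l2norm f)%E.
Proof.
move=> t0; apply/eqP; rewrite eq_le; apply/andP; split.
  apply: l2norm_le_scale => [|g]; first exact: ltW.
  by rewrite cnormM cnormR gtr0_norm.
have t0' : (0 <= t%:E)%E by rewrite lee_fin ltW.
rewrite -[leRHS]mul1e -(mulfV (lt0r_neq0 t0)) EFinM -muleA lee_wpmul2l //.
apply: l2norm_le_scale => [|g]; first by rewrite invr_ge0 ltW.
by rewrite cnormM cnormR gtr0_norm // mulrA mulVf ?gt_eqF // mul1r.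
Qed.

Definition delta1 : G -> C := fun g => if g == 1%g then 1 else 0.

Lemma l2norm_delta1 : (l2norm delta1 <= 1)%E.
Proof.
apply: l2norm_le_fsum => X Xf.
rewrite -(fsbig_widen (X `&` [set 1%g]) X) => [| |g [Xg nXg]]; first last.
- rewrite /preimage /= /delta1; case: eqP => [g1|_]; last by rewrite cnorm0 expr0n.
  by exfalso; apply: nXg.
- by move=> g [].
have [X1|X1] := pselect (X 1%g).
  rewrite (_ : X `&` _ = [set 1%g]); last by apply/seteqP; split=> g /=; [case | move=> ->].
  by rewrite fsbig_set1 /delta1 eqxx cnorm1 expr1n sqrtr1.
rewrite (_ : X `&` _ = set0); first by rewrite fsbig_set0 sqrtr0 lee_fin.
by apply/seteqP; split => g //= [Xg g1]; apply: X1; rewrite -g1.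
Qed.

End L2Norm.

Arguments delta1 {R G}.

Section Finsupp.
Variables (R : realType) (G : groupType).
Local Notation C := R[i].

Lemma sub_finsupp (a b : G -> C) : (forall g, a g = 0 -> b g = 0) ->
  finsupp a -> finsupp b.
Proof.
move=> ab; apply: sub_finite_set => g /=; apply: contra_neq; exact: ab.
Qed.

Lemma finsuppMl (a c : G -> C) : finsupp c -> finsupp (fun g => a g * c g).
Proof. by apply: sub_finsupp => g ->; rewrite mulr0. Qed.

Lemma finsupp0 : finsupp (fun _ : G => 0 : C).
Proof. by apply: sub_finite_set (finite_set0 G) => g /=; rewrite eqxx. Qed.

End Finsupp.

Section TwistedConvolution.
Variables (R : realType) (G : groupType) (s : G -> G -> R[i]).
Local Notation C := R[i].
Implicit Types (c xi : G -> C).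

(* [twisted_apply] sums over [setT] with [fsbig], which is [0] on infinite
   supports; for finitely supported [c] it is the honest finite sum. *)
Lemma twisted_apply_fsum c xi (P : set G) h : finite_set P ->
  [set g | c g != 0] `<=` P ->
  twisted_apply s c xi h = \sum_(g \in P) c g * s g (g^-1 * h)%g * xi (g^-1 * h)%g.
Proof.
move=> Pf cP; rewrite /twisted_apply (fsbig_widen P [set: G]) // => g [_ Pg] /=.
suff -> : c g = 0 by rewrite !mul0r.
by apply/eqP/negPn/negP => /cP.
Qed.

Lemma twisted_applyD a b xi h : finsupp a -> finsupp b ->
  twisted_apply s (fun g => a g + b g) xi h = twisted_apply s a xi h + twisted_apply s b xi h.
Proof.
move=> af bf; set P := [set g | a g != 0] `|` [set g | b g != 0].
have Pf : finite_set P by rewrite finite_setU.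
rewrite !(twisted_apply_fsum _ _ Pf) => [|g|g|g]; last 3 first.
- by right.
- by left.
- rewrite /= /P /=; have [a0|an0] := eqVneq (a g) 0; last by left.
  by rewrite a0 add0r; right.
by rewrite -fsbig_split //; apply: eq_fsbigr => g _; rewrite !mulrDl.
Qed.

Lemma twisted_applyZ t c xi h :
  twisted_apply s (fun g => t * c g) xi h = t * twisted_apply s c xi h.
Proof. by rewrite /twisted_apply mulr_fsumr; apply: eq_fsbigr => g _; rewrite !mulrA. Qed.

Lemma twisted_apply_delta1 c : (forall g, s g 1%g = 1) -> twisted_apply s c delta1 = c.
Proof.
move=> s1; apply: funext => h.
rewrite /twisted_apply -(fsbig_widen [set h] [set: G]) //; last first.
  move=> g [_ /= ngh]; rewrite /delta1; case: eqP => [/eqP|_]; last by rewrite mulr0.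
  by rewrite mulg_eq1 => /eqP /invg_inj gh; exfalso; apply: ngh.
by rewrite fsbig_set1 mulVg /delta1 eqxx mulr1 s1 mulr1.
Qed.

End TwistedConvolution.

Section OperatorNorm.
Variables (R : realType) (G : groupType) (s : G -> G -> R[i]).
Local Notation C := R[i].
Implicit Types (c xi : G -> C).

Lemma opnorm_ub c xi : (l2norm xi <= 1)%E ->
  (l2norm (twisted_apply s c xi) <= opnorm s c)%E.
Proof. by move=> xi1; apply: ereal_sup_ubound; exists xi. Qed.

Lemma opnorm_le c (x : \bar R) :
  (forall xi, (l2norm xi <= 1)%E -> (l2norm (twisted_apply s c xi) <= x)%E) ->
  (opnorm s c <= x)%E.
Proof. by move=> cx; apply: ge_ereal_sup => _ [xi /= xi1 <-]; exact: cx. Qed.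

Lemma opnorm_ge0 c : (0 <= opnorm s c)%E.
Proof.
by apply: le_trans (l2norm_ge0 _) (opnorm_ub c (xi := fun _ => 0) _); rewrite l2norm0.
Qed.

Lemma opnorm0 : opnorm s (fun _ => 0) = 0%E.
Proof.
apply/eqP; rewrite eq_le opnorm_ge0 andbT; apply: opnorm_le => xi _.
rewrite (_ : twisted_apply s _ xi = fun _ => 0) ?l2norm0 //.
by apply: funext => h; rewrite /twisted_apply fsbig1 // => g _; rewrite !mul0r.
Qed.

Lemma opnormD a b : finsupp a -> finsupp b ->
  (opnorm s (fun g => (a g + b g)%R) <= opnorm s a + opnorm s b)%E.
Proof.
move=> af bf; apply: opnorm_le => xi xi1.
rewrite (_ : twisted_apply s _ xi = fun h => twisted_apply s a xi h + twisted_apply s b xi h).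
  by apply: le_trans (l2normD _ _) _; apply: leeD; apply: opnorm_ub.
by apply: funext => h; rewrite twisted_applyD.
Qed.

Lemma opnormZ (t : R) c : 0 < t ->
  opnorm s (fun g => (t%:C)%C * c g) = (t%:E * opnorm s c)%E.
Proof.
move=> t0; rewrite /opnorm -ereal_sup_pZl // image_comp; congr ereal_sup.
apply: eq_imagel => xi _ /=; rewrite -l2normZ //.
by congr l2norm; apply: funext => h; rewrite twisted_applyZ.
Qed.

Lemma l2norm_le_opnorm c : (forall g, s g 1%g = 1) -> (l2norm c <= opnorm s c)%E.
Proof.
by move=> s1; rewrite -{1}(twisted_apply_delta1 c s1); apply/opnorm_ub/l2norm_delta1.
Qed.

End OperatorNorm.

Section Domination.
Variables (R : realType) (G : groupType) (s : G -> G -> R[i]).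

Lemma opnorm_le_triv_abs a : (forall g h, cnorm (s g h) = 1) -> finsupp a ->
  (opnorm s a <= opnorm (@triv_cocycle R G) (fun g => (cnorm (a g))%:C%C))%E.
Proof.
move=> s_unit af; apply: opnorm_le => xi xi1.
set A := fun g => (cnorm (a g))%:C%C; set Xi := fun g => (cnorm (xi g))%:C%C.
have Xi1 : (l2norm Xi <= 1)%E.
  by rewrite (@eq_l2norm _ _ Xi xi) // => g; rewrite /Xi cnormR ger0_norm // cnorm_ge0.
apply: le_trans (opnorm_ub _ _ Xi1); rewrite -[leRHS]mul1e.
apply: l2norm_le_scale => // h; rewrite mul1r.
have AP : [set g | A g != 0] `<=` [set g | a g != 0].
  by move=> g /=; apply: contra_neq; rewrite /A => ->; rewrite cnorm0.
rewrite (twisted_apply_fsum _ _ _ af (@subset_refl _ _)) (twisted_apply_fsum _ _ _ af AP).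
rewrite !fsbig_finite //; apply: le_trans (cnorm_sum _ _) _.
rewrite (eq_bigr (fun g => (cnorm (a g) * cnorm (xi (g^-1 * h)%g))%:C%C)); last first.
  by move=> g _; rewrite /A /Xi /triv_cocycle mulr1 rmorphM.
rewrite -rmorph_sum cnormR ger0_norm; last by apply: sumr_ge0 => g _; rewrite mulr_ge0 ?cnorm_ge0.
by apply: ler_sum => g _; rewrite !cnormM s_unit mulr1.
Qed.

End Domination.

Section MultiplierNorm.
Variables (R : realType) (G : groupType) (s : G -> G -> R[i]).
Local Notation C := R[i].
Implicit Types (psi c : G -> C).

Lemma mult_norm_ub psi c : finsupp c -> (opnorm s c <= 1)%E ->
  (opnorm s (fun g => (psi g * c g)%R) <= mult_norm s psi)%E.
Proof. by move=> cf c1; apply: ereal_sup_ubound; exists c. Qed.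

Lemma mult_norm_le psi (x : \bar R) :
  (forall c, finsupp c -> (opnorm s c <= 1)%E ->
     (opnorm s (fun g => (psi g * c g)%R) <= x)%E) ->
  (mult_norm s psi <= x)%E.
Proof. by move=> psix; apply: ge_ereal_sup => _ [c [cf c1] <-]; exact: psix. Qed.

Lemma mult_norm_ge0 psi : (0 <= mult_norm s psi)%E.
Proof.
apply: le_trans (opnorm_ge0 s _) (mult_norm_ub psi (finsupp0 R G) _).
by rewrite opnorm0.
Qed.

Lemma mult_normD a b :
  (mult_norm s (fun g => (a g + b g)%R) <= mult_norm s a + mult_norm s b)%E.
Proof.
apply: mult_norm_le => c cf c1.
rewrite (_ : (fun g => _) = fun g => a g * c g + b g * c g); last first.
  by apply: funext => g; rewrite mulrDl.
apply: le_trans (opnormD _ (finsuppMl _ cf) (finsuppMl _ cf)) _.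
by apply: leeD; apply: mult_norm_ub.
Qed.

Lemma mult_normZ (t : R) psi : 0 < t ->
  mult_norm s (fun g => (t%:C)%C * psi g) = (t%:E * mult_norm s psi)%E.
Proof.
move=> t0; rewrite /mult_norm -ereal_sup_pZl // image_comp; congr ereal_sup.
apply: eq_imagel => c _ /=; rewrite -opnormZ //.
by congr opnorm; apply: funext => g; rewrite mulrA.
Qed.

End MultiplierNorm.

Section Truncation.
Variables (R : realType) (G : groupType) (s : G -> G -> R[i]).
Local Notation C := R[i].
Hypothesis s_cocycle : two_cocycle s.
Variable kappa : G -> R.
Hypothesis kappa_ge0 : forall g, 0 <= kappa g.

Definition decays_with (M : R) : Prop := forall f : G -> C, finsupp f ->
  (opnorm (@triv_cocycle R G) f <= M%:E * l2norm (fun g => (f g * (kappa g)%:C%C)%R))%E.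

Lemma kappa_decayingP : kappa_decaying kappa -> exists2 M : R, 0 <= M & decays_with M.
Proof.
case=> M decM; exists (Num.max M 0); first by rewrite le_max lexx orbT.
move=> f ff; apply: le_trans (decM f ff) _; apply: lee_wpmul2r; first exact: l2norm_ge0.
by rewrite lee_fin le_max lexx.
Qed.

Lemma mult_norm_le_decay (M : R) (d : G -> C) (e : R) : 0 <= M -> 0 <= e ->
  decays_with M -> (forall g, cnorm (d g) * kappa g <= e) ->
  (mult_norm s d <= (M * e)%:E)%E.
Proof.
move=> M0 e0 decM de; apply: mult_norm_le => c cf c1.
have [s_unit [_ s_norm]] := s_cocycle.
apply: le_trans (opnorm_le_triv_abs s_unit (finsuppMl d cf)) _.
set f := fun g => (cnorm _)%:C%C.
have ff : finsupp f by apply: sub_finsupp cf => g c0; rewrite /f c0 mulr0 cnorm0.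
have fk : (l2norm (fun g => (f g * (kappa g)%:C%C)%R) <= e%:E * l2norm c)%E.
  apply: l2norm_le_scale => // g; rewrite /f !cnormM !cnormR !ger0_norm ?mulr_ge0 ?cnorm_ge0 //.
  by rewrite mulrAC ler_wpM2r ?cnorm_ge0.
have c_l2 : (l2norm c <= 1)%E.
  exact: le_trans (l2norm_le_opnorm c (fun g => (s_norm g).1)) c1.
apply: le_trans (decM f ff) _; rewrite EFinM lee_wpmul2l ?lee_fin //.
by apply: le_trans fk _; rewrite -[leRHS]mule1 lee_wpmul2l ?lee_fin.
Qed.

Definition truncate (eps : R) (phi : G -> C) : G -> C :=
  fun g => if eps <= cnorm (phi g * (kappa g)%:C%C) then phi g else 0.

Lemma finsupp_truncate eps phi : 0 < eps ->
  c0 (fun g => phi g * (kappa g)%:C%C) -> finsupp (truncate eps phi).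
Proof.
move=> eps0 /(_ eps eps0); apply: sub_finite_set => g /=.
by rewrite /truncate; case: ifP => //; rewrite eqxx.
Qed.

Lemma truncate_id eps phi g : eps <= cnorm (phi g * (kappa g)%:C%C) ->
  truncate eps phi g = phi g.
Proof. by rewrite /truncate => ->. Qed.

Lemma truncate_err eps phi g : 0 <= eps ->
  cnorm (truncate eps phi g - phi g) * kappa g <= eps.
Proof.
rewrite /truncate; case: ifPn => [_ eps0|]; first by rewrite subrr cnorm0 mul0r.
by rewrite -ltNge sub0r cnormN cnormM cnormR ger0_norm // => /ltW.
Qed.

Lemma mult_norm_truncate (M : R) (phi : G -> C) (eps : R) : 0 <= M -> 0 <= eps ->
  decays_with M -> mult_norm s phi = 1%E ->
  exists m : R, mult_norm s (truncate eps phi) = m%:E /\ `|m - 1| <= M * eps.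
Proof.
move=> M0 eps0 decM phi1.
have err (a b : G -> C) : (forall g, cnorm (a g - b g) * kappa g <= eps) ->
    (mult_norm s a <= mult_norm s b + (M * eps)%:E)%E.
  move=> ab; rewrite (_ : a = fun g => (b g + (a g - b g))%R).
    by apply: le_trans (mult_normD _ _ _) _; rewrite leeD2l // mult_norm_le_decay.
  by apply: funext => g; rewrite addrC subrK.
have up := err _ phi (fun g => truncate_err phi g eps0).
have low : (mult_norm s phi <= mult_norm s (truncate eps phi) + (M * eps)%:E)%E.
  by apply: err => g; rewrite cnormB truncate_err.
move: up low (mult_norm_ge0 s (truncate eps phi)); rewrite phi1.
case: (mult_norm s _) => [m| |] //= up low _; exists m; split => //.
by move: up low; rewrite -EFinD !lee_fin => up low; rewrite ler_norml; apply/andP; split; lra.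
Qed.

End Truncation.

Section FejerApproximation.
Variables (R : realType) (G : groupType) (s : G -> G -> R[i]).
Local Notation C := R[i].
Hypothesis s_cocycle : two_cocycle s.

Lemma fejer_approx (phi : G -> C) (kappa : G -> R) (delta : R) :
  mult_norm s phi = 1%E -> (forall g, 1 <= kappa g) -> kappa_decaying kappa ->
  c0 (fun g => phi g * (kappa g)%:C%C) -> 0 < delta -> delta <= 2^-1 ->
  exists psi : G -> C, [/\ finsupp psi, mult_norm s psi = 1%E &
    forall g, cnorm (phi g - 1) <= 2^-1 ->
      cnorm (psi g - 1) <= 2 * (cnorm (phi g - 1) + delta)].
Proof.
move=> phi1 kappa_ge1 /kappa_decayingP[M M0 decM] phik0 delta0 delta_half.
have kappa_ge0 g : 0 <= kappa g := le_trans ler01 (kappa_ge1 g).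
pose eps := delta / (M + 1).
have eps0 : 0 < eps by rewrite divr_gt0 ?ltr_wpDl.
have [eps_delta Meps] : eps <= delta /\ M * eps <= delta.
  by rewrite /eps mulrA !ler_pdivrMr ?ltr_wpDl //; split; nra.
have [m [m_def m1]] := mult_norm_truncate s_cocycle kappa_ge0 M0 (ltW eps0) decM phi1.
have m_half : 2^-1 <= m by move: m1; rewrite ler_norml => /andP[]; lra.
have m0 : 0 < m by apply: lt_le_trans m_half; rewrite invr_gt0.
exists (fun g => (m^-1%:C)%C * truncate kappa eps phi g); split.
- exact/finsuppMl/finsupp_truncate.
- by rewrite mult_normZ ?invr_gt0 // m_def -EFinM mulVf ?lt0r_neq0.
move=> g phig.
have phig_half : 2^-1 <= cnorm (phi g).
  by have := cnormD (1 - phi g) (phi g); rewrite subrK cnorm1 cnormB; lra.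
rewrite truncate_id; last first.
  rewrite cnormM cnormR ger0_norm //.
  have := kappa_ge1 g; have := cnorm_ge0 (phi g); nra.
have -> : (m^-1%:C)%C * phi g - 1 = (m^-1%:C)%C * (phi g - (m%:C)%C).
  by rewrite mulrBr -rmorphM mulVf ?lt0r_neq0.
have minv_ge0 : 0 <= m^-1 by rewrite invr_ge0 ltW.
rewrite cnormM cnormR ger0_norm //.
have dist_m : cnorm (phi g - (m%:C)%C) <= cnorm (phi g - 1) + delta.
  have -> : phi g - (m%:C)%C = (phi g - 1) + ((1 - m)%:C)%C.
    by rewrite rmorphB rmorph1 addrA subrK.
  apply: le_trans (cnormD _ _) _; rewrite cnormR distrC lerD2l.
  exact: le_trans m1 Meps.
apply: ler_pM; rewrite ?cnorm_ge0 //.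
by rewrite -[2]invrK lef_pV2 ?posrE ?invr_gt0.
Qed.

End FejerApproximation.

Definition prod_le (I : Type) (le : I -> I -> Prop) (x y : I * nat) : Prop :=
  le x.1 y.1 /\ (x.2 <= y.2)%N.

Lemma directed_prod_le (I : Type) (le : I -> I -> Prop) :
  directed le -> directed (prod_le le).
Proof.
case=> [[i0] [leii [le_tr le_dir]]]; split; first exact: inhabits (i0, 0%N).
split; first by move=> x; split; [exact: leii|].
split; first by move=> x y z [xy1 xy2] [yz1 yz2]; split; [exact: le_tr yz1|exact: leq_trans yz2].
move=> [i n] [j k]; have [l [il jl]] := le_dir i j.
by exists (l, maxn n k); rewrite /prod_le /= leq_maxl leq_maxr.
Qed.

Section PointwiseConvergence.
Variables (R : realType) (G : groupType) (I : Type) (le : I -> I -> Prop).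
Local Notation C := R[i].

Lemma pw_conv_to_one_prod (phi : I -> G -> C) (psi : I * nat -> G -> C) :
  pw_conv_to_one le phi ->
  (forall i n g, cnorm (phi i g - 1) <= 2^-1 ->
     cnorm (psi (i, n) g - 1) <= 2 * (cnorm (phi i g - 1) + (n.+2%:R)^-1)) ->
  pw_conv_to_one (prod_le le) psi.
Proof.
move=> phi_conv psi_near g e e0.
have e4 : 0 < e / 4 by rewrite divr_gt0.
have e' : 0 < Num.min (e / 4) 2^-1 by rewrite lt_min e4 invr_gt0 ltr0n.
have [i0 phi_i0] := phi_conv g _ e'.
have [n0] := ltr_add_invr e4; rewrite add0r => n0_e.
exists (i0, n0) => -[i n] [/= i0i n0n].
have := phi_i0 i i0i; rewrite lt_min => /andP[phi_e /ltW phi_half].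
apply: le_lt_trans (psi_near i n g phi_half) _.
have : (n.+2%:R : R)^-1 < e / 4.
  by apply: le_lt_trans n0_e; rewrite lef_pV2 ?posrE ?ltr0n // ler_nat ltnS leqW.
have : e = 4 * (e / 4) by rewrite mulrC divfK ?pnatr_eq0.
move: (n.+2%:R^-1 : R) => delta; lra.
Qed.

End PointwiseConvergence.

Theorem theorem5p14 (R : realType) (G : groupType) (s : G -> G -> R[i])
  (hs : two_cocycle s)
  (I : Type) (le : I -> I -> Prop) (hI : directed le)
  (phi : I -> G -> R[i]) (kappa : I -> G -> R)
  (hMA : forall i, in_MA s (phi i))
  (hconv : pw_conv_to_one le phi)
  (hnorm : forall i, mult_norm s (phi i) = 1%E)
  (hk1 : forall i g, 1 <= kappa i g)
  (hdec : forall i, kappa_decaying (kappa i))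
  (hc0 : forall i, c0 (fun g => phi i g * ((kappa i g)%:C)%C)) :
  metric_fejer s.
Proof.
have delta0 n : 0 < ((n.+2)%:R : R)^-1 by rewrite invr_gt0 ltr0n.
have delta_half n : ((n.+2)%:R : R)^-1 <= 2^-1.
  by rewrite lef_pV2 ?posrE ?ltr0n // ler_nat.
have approx (x : I * nat) := fejer_approx hs (hnorm x.1) (hk1 x.1) (hdec x.1) (hc0 x.1)
  (delta0 x.2) (delta_half x.2).
have [psi psiP] := choice approx.
exists (I * nat)%type, (prod_le le); split; first exact: directed_prod_le.
exists psi; split; [|split].
- by move=> x; case: (psiP x).
- by apply: pw_conv_to_one_prod hconv _ => i n; case: (psiP (i, n)).
- by move=> x; case: (psiP x).
Qed.
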